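(* For all $n\ge0$, $$F_n(x,y,q)F_{n+1}(x,y,q)=\sum_{j=0}^nxy^jq^{\lfloor j^2/2\rfloor}F_{n-j}(xq^j,yq^j,q)F_{n-j}(xq^{j+1},yq^{j+1},q).$$
   Context: $\Pi_n(13/2,123)$ is the set of layered matchings of $[n]$: set partitions whose blocks are consecutive intervals $[1,i_1]/\dots/[i_{k-1}+1,n]$, each of size $1$ or $2$. $\Pi_0(13/2,123)$ consists of the empty partition. For $\pi=B_1/\dots/B_k$ with $\min B_1<\dots<\min B_k$, $rb(\pi)$ is the number of pairs $(b,B_j)$ with $b\in B_i$, $j>i$, $\max B_j>b$. Let $s(\pi)$ and $d(\pi)$ be the numbers of blocks of size $1$ and $2$. Define $F_n(x,y,q)=\sum_{\pi\in\Pi_n(13/2,123)}x^{s(\pi)}y^{d(\pi)}q^{rb(\pi)}$, so $F_0=1$ and $F_1=x$. $F_n(xq^a,yq^a,q)$ denotes the substitution $x\mapsto xq^a$, $y\mapsto yq^a$. *)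

From HB Require Import structures.
From mathcomp Require Import all_boot all_order all_algebra.
Set Implicit Arguments. Unset Strict Implicit. Unset Printing Implicit Defensive.
Import GRing.Theory.

(* A set partition of [n] is represented as the list of its blocks
   B_1, ..., B_k, ordered by increasing minima; each block is a list of
   its elements in increasing order. *)

(* Compositions of n with parts in {1,2} (the sizes of the consecutive
   interval blocks of a layered matching, read from left to right). *)
Fixpoint comps12 (n : nat) : seq (seq nat) :=
  match n with
  | 0 => [:: [::]]
  | 1 => [:: [:: 1]]
  | (m.+1 as m1).+1 => [seq 1 :: c | c <- comps12 m1] ++ [seq 2 :: c | c <- comps12 m]
  end.

Fixpoint blocks_of (a : nat) (c : seq nat) : seq (seq nat) :=
  match c with
  | [::] => [::]
  | p :: c' => iota a p :: blocks_of (a + p) c'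
  end.

Definition layered (n : nat) : seq (seq (seq nat)) :=
  [seq blocks_of 1 c | c <- comps12 n].

Definition maxB (B : seq nat) : nat := foldr maxn 0 B.

Definition rb (P : seq (seq nat)) : nat :=
  sumn [seq count (fun Bj => b < maxB Bj) (drop i.+1 P)
       | i <- iota 0 (size P), b <- nth [::] P i].

Definition sblocks (P : seq (seq nat)) : nat := count (fun B => size B == 1) P.
Definition dblocks (P : seq (seq nat)) : nat := count (fun B => size B == 2) P.

Definition F (R : comRingType) (n : nat) (x y q : R) : R :=
  (\sum_(P <- layered n) x ^+ sblocks P * y ^+ dblocks P * q ^+ rb P)%R.

(* A layered matching of [n] is determined by the composition of n into
   parts 1 and 2 listing its block sizes from left to right.  Since the
   blocks are consecutive intervals, every element b of a block B_i lies
   below max B_j for each later block B_j, so it pairs with all of them: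
   rb is the sum, over the parts p of the composition, of p times the
   number of parts after p.  Splitting off the first part then gives the
   recurrence
       F_{n+2}(x,y) = x F_{n+1}(xq,yq) + y F_n(xq^2,yq^2),
   with F_0 = 1 and F_1 = x.

   Writing S_n(x,y) for the right-hand side of the identity, its terms
   j >= 2 are y^2 times those of S_{n-2}(xq^2,yq^2), so
       S_{n+2}(x,y) = x F_{n+2}(x,y) F_{n+2}(xq,yq)
                     + x y F_{n+1}(xq,yq) F_{n+1}(xq^2,yq^2)
                     + y^2 S_n(xq^2,yq^2).
   Expanding F_{n+3}(x,y) and one factor F_{n+2}(x,y) with the recurrence
   shows that F_{n+2} F_{n+3} satisfies the same relation, and the theorem
   follows by strong induction on n, for all x and y simultaneously. *)

From HB Require Import structures.
From mathcomp Require Import all_boot all_order all_algebra.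
From mathcomp Require Import ring zify.
Import GRing.Theory.
Local Open Scope ring_scope.

Definition parts12 (c : seq nat) : bool :=
  all (fun p => (p == 1) || (p == 2))%N c.

Lemma comps12_SS n :
  comps12 n.+2 = [seq 1%N :: c | c <- comps12 n.+1] ++ [seq 2%N :: c | c <- comps12 n].
Proof. by []. Qed.

Lemma comps12_parts12 {n c} : c \in comps12 n -> parts12 c.
Proof.
elim/ltn_ind: n c => -[|[|n]] IH c; first by rewrite inE => /eqP ->.
  by rewrite inE => /eqP ->.
rewrite comps12_SS mem_cat => /orP[] /mapP[c' c'_in ->] /=.
  by rewrite (IH n.+1).
by rewrite (IH n).
Qed.

Lemma parts12_pos {c} : parts12 c -> all (fun p => 0 < p)%N c.
Proof. by elim: c => //= p c IH /andP[/orP[]/eqP-> /IH ->]. Qed.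

Lemma parts12_size {c} :
  parts12 c -> size c = (count_mem 1%N c + count_mem 2%N c)%N.
Proof. by elim: c => //= p c IH /andP[/orP[]/eqP-> /IH ->]; lia. Qed.

(* rb of a composition: each part p pairs with every later part, p times. *)
Fixpoint rbc (c : seq nat) : nat :=
  if c is p :: c' then (p * size c' + rbc c')%N else 0%N.

Lemma rb_cons B P :
  rb (B :: P) = (sumn [seq count (fun Bj => b < maxB Bj)%N P | b <- B] + rb P)%N.
Proof.
rewrite /rb /= drop0 sumn_cat; congr (_ + _)%N.
by rewrite -[1%N]addn0 iotaDl -map_comp.
Qed.

Lemma maxB_ge b B : b \in B -> (b <= maxB B)%N.
Proof.
elim: B => //= a B IH; rewrite inE => /orP[/eqP->|/IH b_le].
  exact: leq_maxl.
exact: leq_trans b_le (leq_maxr _ _).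
Qed.

Lemma blocks_of_maxB {a c Bj} :
  all (fun p => 0 < p)%N c -> Bj \in blocks_of a c -> (a <= maxB Bj)%N.
Proof.
elim: c a => //= p c IH a /andP[p_gt0 c_pos]; rewrite inE => /orP[/eqP->|Bj_in].
  by apply: maxB_ge; rewrite mem_iota leqnn /= -addn1 leq_add2l.
exact: leq_trans (leq_addr _ _) (IH _ c_pos Bj_in).
Qed.

Lemma size_blocks_of a c : size (blocks_of a c) = size c.
Proof. by elim: c a => //= p c IH a; rewrite IH. Qed.

(* rb of the interval partition of a composition with positive parts is rbc:
   each of the p elements of the first block is below the maximum of every
   later block. *)
Lemma rb_blocks_of a c : all (fun p => 0 < p)%N c -> rb (blocks_of a c) = rbc c.
Proof.
elim: c a => //= p c IH a /andP[_ c_pos]; rewrite rb_cons IH //; congr (_ + _)%N.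
have all_later b : b \in iota a p ->
    count (fun Bj => b < maxB Bj)%N (blocks_of (a + p) c) = size c.
  rewrite mem_iota => /andP[_ b_lt]; rewrite -(size_blocks_of (a + p)).
  rewrite -count_predT; apply: eq_in_count => Bj /(blocks_of_maxB c_pos).
  exact: leq_trans b_lt.
rewrite (eq_in_map _ (fun=> size c) _).1 // mulnC -{2}(size_iota a p).
by elim: (iota a p) => [|b s IHs] /=; rewrite ?muln0 // IHs mulnS.
Qed.

Lemma sblocks_blocks_of a c : sblocks (blocks_of a c) = count_mem 1%N c.
Proof. by elim: c a => //= p c IH a; rewrite IH size_iota. Qed.

Lemma dblocks_blocks_of a c : dblocks (blocks_of a c) = count_mem 2%N c.
Proof. by elim: c a => //= p c IH a; rewrite IH size_iota. Qed.

Section Recurrence.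

Variables (R : comRingType) (q : R).

Definition cweight (x y : R) (c : seq nat) : R :=
  x ^+ count_mem 1%N c * y ^+ count_mem 2%N c * q ^+ rbc c.

Lemma F_comps n x y : F n x y q = \sum_(c <- comps12 n) cweight x y c.
Proof.
rewrite /F /layered big_map big_seq [RHS]big_seq; apply: eq_bigr => c c_in.
have c_pos := parts12_pos (comps12_parts12 c_in).
by rewrite sblocks_blocks_of dblocks_blocks_of rb_blocks_of.
Qed.

Lemma F0 x y : F 0 x y q = 1.
Proof. by rewrite F_comps big_seq1 /cweight /= !expr0 !mulr1. Qed.

Lemma F1 x y : F 1 x y q = x.
Proof. by rewrite F_comps big_seq1 /cweight /= expr1 !expr0 !mulr1. Qed.

(* A leading part p multiplies the weight of the rest by x or y and shifts
   x, y to xq^p, yq^p, since it pairs p times with each remaining part. *)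
Lemma cweight_cons (p : nat) (x y : R) c :
  parts12 c -> (p == 1%N) || (p == 2%N) ->
  cweight x y (p :: c) =
  (if p == 1%N then x else y) * cweight (x * q ^+ p) (y * q ^+ p) c.
Proof.
move=> c12 /orP[]/eqP->; rewrite /cweight /= (parts12_size c12) mulnDr !exprD;
  rewrite ?mul1n ?exprM !exprMn; ring.
Qed.

(* The first block of a layered matching of [n+2] is a singleton or a pair. *)
Lemma F_rec n x y :
  F n.+2 x y q = x * F n.+1 (x * q) (y * q) q + y * F n (x * q ^+ 2) (y * q ^+ 2) q.
Proof.
rewrite !F_comps comps12_SS big_cat !big_map !mulr_sumr.
congr (_ + _); rewrite big_seq [RHS]big_seq; apply: eq_bigr => c c_in;
  by rewrite cweight_cons ?expr1 //=; exact: comps12_parts12 c_in.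
Qed.

Definition rhs (n : nat) (x y : R) : R :=
  \sum_(j < n.+1)
     x * y ^+ j * q ^+ (j * j)./2
       * F (n - j) (x * q ^+ j) (y * q ^+ j) q
       * F (n - j) (x * q ^+ j.+1) (y * q ^+ j.+1) q.

Lemma half_sqSS j : ((j.+2 * j.+2)./2 = 2 * j + 2 + (j * j)./2)%N.
Proof.
have -> : (j.+2 * j.+2 = (2 * j + 2).*2 + j * j)%N by rewrite -muln2; lia.
by rewrite halfD odd_double doubleK.
Qed.

Lemma rhs_SS n x y :
  rhs n.+2 x y =
    x * F n.+2 x y q * F n.+2 (x * q) (y * q) q
  + x * y * F n.+1 (x * q) (y * q) q * F n.+1 (x * q ^+ 2) (y * q ^+ 2) q
  + y ^+ 2 * rhs n (x * q ^+ 2) (y * q ^+ 2).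
Proof.
have shift (a : R) k : a * q ^+ 2 * q ^+ k = a * q ^+ k.+2.
  by rewrite -mulrA -exprD add2n.
rewrite /rhs 2!big_ord_recl addrA; congr (_ + _ + _).
- by rewrite !subn0 !expr0 expr1 !mulr1.
- by rewrite lift0 !expr1 subn1 !mulr1.
rewrite [RHS]mulr_sumr; apply: eq_bigr => j _.
rewrite !lift0 !subSS !shift half_sqSS !exprD !exprMn.
set Fj := F _ _ _ q; set Fj1 := F _ _ _ q.
by rewrite !exprS; ring.
Qed.

Lemma F_product n x y : F n x y q * F n.+1 x y q = rhs n x y.
Proof.
elim/ltn_ind: n x y => -[|[|n]] IH x y.
- by rewrite /rhs big_ord1 F0 F1 subnn !F0 !expr0 !mulr1 mul1r.
- by rewrite /rhs !big_ord_recl big_ord0 F_rec F1 !F0 /= !F1 !expr0 expr1; ring.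
rewrite rhs_SS -IH // (F_rec n.+1) mulrDr -addrA; congr (_ + _); first by ring.
by rewrite (F_rec n); ring.
Qed.

End Recurrence.

Theorem theorem4p5 (R : comRingType) (x y q : R) (n : nat) :
  F n x y q * F n.+1 x y q =
  \sum_(j < n.+1)
     x * y ^+ j * q ^+ (j * j)./2
       * F (n - j) (x * q ^+ j) (y * q ^+ j) q
       * F (n - j) (x * q ^+ j.+1) (y * q ^+ j.+1) q.
Proof. exact: F_product. Qed.
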